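(* Let $f\in C^1(\mathbb{R}^n,\mathbb{R}^n)$, $g\in C(\mathbb{R}\times\mathbb{R}^n\times[0,1],\mathbb{R}^n)$, and let $x_0$ be a nondegenerate $T$-periodic limit cycle of $\dot x=f(x)$, $T>0$. Let $x_\varepsilon$ ($\varepsilon\in(0,\varepsilon_0]$) be $T$-periodic solutions of $\dot x=f(x)+\varepsilon g(t,x,\varepsilon)$ with $\|x_\varepsilon(t+\Delta_\varepsilon)-x_0(t)\|\le M\varepsilon$ for all $t\in[0,T]$, $\varepsilon\in(0,\varepsilon_0]$, for some $M,\varepsilon_0>0$ and reals $\Delta_\varepsilon\to0$. Let $z$ be any eigenfunction of $\dot z=-(f'(x_0(t)))^*z$ which is not $T$-periodic, with multiplier $\rho$, and let $M^\perp_z(t)=\frac{\rho}{\rho-1}\int_{t-T}^t\langle z(s),g(s,x_0(s),0)\rangle ds$. Then for every $t\in[0,T]$: if $M^\perp_z(t)>0$ then $\cos\angle\big(z(t),x_\varepsilon(t+\Delta_\varepsilon)-x_0(t)\big)>0$ for all sufficiently small $\varepsilon>0$; and if $M^\perp_z(t)<0$ then $\cos\angle\big(z(t),x_\varepsilon(t+\Delta_\varepsilon)-x_0(t)\big)<0$ for all sufficiently small $\varepsilon>0$.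
   Context: Nondegenerate: the characteristic multiplier $+1$ of $\dot y=f'(x_0(t))y$ (eigenvalue $1$ of $Y(T)$, $Y(0)=I$) has algebraic multiplicity $1$. An eigenfunction of a linear $T$-periodic system is a nonzero solution $z$ with $z(t+T)=\rho z(t)$ for all $t$ and some $\rho\in\mathbb{R}$ (its characteristic multiplier). $\cos\angle(a,b)=\langle a,b\rangle/(\|a\|\,\|b\|)$ for $a,b\in\mathbb{R}^n$. *)

From HB Require Import structures.
From mathcomp Require Import all_boot all_order all_algebra.
From mathcomp Require Import all_classical all_reals all_analysis.
Set Implicit Arguments. Unset Strict Implicit. Unset Printing Implicit Defensive.
Import Order.TTheory GRing.Theory Num.Theory.
Import numFieldNormedType.Exports.
Local Open Scope classical_set_scope.
Local Open Scope ring_scope.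

Section Defs.
Variables (R : realType) (n : nat).

Definition dotv (a b : 'cV[R]_n) : R := \sum_(i < n) a i ord0 * b i ord0.

(* Euclidean norm and cos of the angle <a,b>/(|a| |b|)
   (division by 0 gives 0 in MathComp, so cos > 0 or < 0 forces a, b <> 0) *)
Definition enorm (a : 'cV[R]_n) : R := Num.sqrt (dotv a a).
Definition cosang (a b : 'cV[R]_n) : R := dotv a b / (enorm a * enorm b).

(* Jacobian matrix f'(x): entry (i,j) is the partial derivative d f_i / d x_j *)
Definition jac (f : 'cV[R]_n -> 'cV[R]_n) (x : 'cV[R]_n) : 'M[R]_n :=
  \matrix_(i, j) (derive f x (delta_mx j ord0)) i ord0.

Definition C1 (f : 'cV[R]_n -> 'cV[R]_n) : Prop :=
  (forall x, differentiable f x) /\ continuous (jac f).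

Definition solves (F : R -> 'cV[R]_n -> 'cV[R]_n) (x : R -> 'cV[R]_n) : Prop :=
  forall t, is_derive t (1 : R) x (F t (x t)).

Definition Tperiodic (T : R) (x : R -> 'cV[R]_n) : Prop := forall t, x (t + T) = x t.

Definition principal_fundamental (A : R -> 'M[R]_n) (Y : R -> 'M[R]_n) : Prop :=
  Y 0 = 1%:M /\ forall t, is_derive t (1 : R) Y (A t *m Y t).

(* x0 is a nondegenerate T-Tperiodic limit cycle of x' = f(x):
   a nonconstant T-Tperiodic solution such that the multiplier 1 of the
   variational equation y' = f'(x0 t) y has algebraic multiplicity 1 *)
Definition nondegenerate_cycle (f : 'cV[R]_n -> 'cV[R]_n) (T : R)
    (x0 : R -> 'cV[R]_n) : Prop :=
  solves (fun _ x => f x) x0 /\ Tperiodic T x0 /\ (exists t, x0 t != x0 0) /\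
  exists Y, principal_fundamental (fun t => jac f (x0 t)) Y /\
            mup 1 (char_poly (Y T)) = 1%N.

Definition adjoint_eigenfunction (f : 'cV[R]_n -> 'cV[R]_n) (T : R)
    (x0 : R -> 'cV[R]_n) (z : R -> 'cV[R]_n) (rho : R) : Prop :=
  solves (fun t y => - ((jac f (x0 t))^T *m y)) z /\
  (exists t, z t != 0) /\ (forall t, z (t + T) = rho *: z t).

Definition Mperp (g : R -> 'cV[R]_n -> R -> 'cV[R]_n) (T : R)
    (x0 z : R -> 'cV[R]_n) (rho : R) (t : R) : R :=
  rho / (rho - 1) *
  Rintegral (@lebesgue_measure R) `[t - T, t] (fun s => dotv (z s) (g s (x0 s) 0)).

End Defs.

From HB Require Import structures.
From mathcomp Require Import all_boot all_order all_algebra.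
From mathcomp Require Import all_classical all_reals all_analysis.
From mathcomp Require Import lra ring.
Import Order.TTheory GRing.Theory Num.Theory.
Import numFieldNormedType.Exports.
Local Open Scope classical_set_scope.
Local Open Scope ring_scope.
Set Implicit Arguments. Unset Strict Implicit. Unset Printing Implicit Defensive.

(* Put d(s) = x_eps(s + Delta_eps) - x0(s) and w(s) = <z(s), d(s)>.  As z solves the adjoint
   system, w' = <z, f(x0 + d) - f(x0) - f'(x0) d> + eps <z, g(s + Delta_eps, x0 + d, eps)>,
   and since d = O(eps) this is eps <z(s), g(s, x0(s), 0)> + o(eps) uniformly on [t - T, t].
   Periodicity of d and the multiplier of z give w(t) = rho w(t - T), so by the mean value
   theorem (rho - 1) w(t - T) = eps \int_{t-T}^t <z, g(., x0, 0)> + o(eps), i.e.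
   w(t) = eps M^perp_z(t) + o(eps), which has the sign of M^perp_z(t) when it is nonzero. *)

Section InnerProduct.
Variables (R : realType) (n : nat).
Implicit Types (a b c : 'cV[R]_n) (k : R).

Lemma dotvDr a b c : dotv a (b + c) = dotv a b + dotv a c.
Proof. by rewrite /dotv -big_split; apply: eq_bigr => i _; rewrite mxE mulrDr. Qed.

Lemma dotvNr a b : dotv a (- b) = - dotv a b.
Proof. by rewrite /dotv -sumrN; apply: eq_bigr => i _; rewrite mxE mulrN. Qed.

Lemma dotvBr a b c : dotv a (b - c) = dotv a b - dotv a c.
Proof. by rewrite dotvDr dotvNr. Qed.

Lemma dotvZr a b k : dotv a (k *: b) = k * dotv a b.
Proof. by rewrite /dotv mulr_sumr; apply: eq_bigr => i _; rewrite mxE mulrCA. Qed.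

Lemma dotvZl a b k : dotv (k *: a) b = k * dotv a b.
Proof. by rewrite /dotv mulr_sumr; apply: eq_bigr => i _; rewrite mxE mulrA. Qed.

Lemma dotvNl a b : dotv (- a) b = - dotv a b.
Proof. by rewrite -scaleN1r dotvZl mulN1r. Qed.

Lemma dotv0l b : dotv 0 b = 0.
Proof. by rewrite -(scale0r 0) dotvZl mul0r. Qed.

Lemma dotv0r a : dotv a 0 = 0.
Proof. by rewrite -(scale0r 0) dotvZr mul0r. Qed.

Lemma dotv_trmx (A : 'M[R]_n) a b : dotv (A^T *m a) b = dotv a (A *m b).
Proof.
rewrite /dotv; under eq_bigr do rewrite mxE big_distrl /=.
rewrite exchange_big /=; apply: eq_bigr => k _.
rewrite mxE big_distrr /=; apply: eq_bigr => i _.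
by rewrite mxE mulrCA mulrA.
Qed.

Lemma dotvv_gt0 a : a != 0 -> 0 < dotv a a.
Proof.
move=> a0; rewrite lt0r sumr_ge0 => [|i _]; last by rewrite -expr2 sqr_ge0.
rewrite andbT; apply: contra a0 => /eqP/psumr_eq0P a2_0.
apply/eqP/matrixP => i j; rewrite (ord1 j) !mxE.
have /eqP := a2_0 (fun j _ => ltac:(by rewrite -expr2 sqr_ge0)) i isT.
by rewrite mulf_eq0 orbb => /eqP.
Qed.

Lemma enorm_gt0 a : a != 0 -> 0 < enorm a.
Proof. by move=> a0; rewrite sqrtr_gt0 dotvv_gt0. Qed.

Lemma dotv_neq0 a b : dotv a b != 0 -> (a != 0) && (b != 0).
Proof.
by apply: contraR; rewrite negb_and => /orP[]/negPn/eqP->; rewrite ?dotv0l ?dotv0r.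
Qed.

Lemma cosang_gt0 a b : 0 < dotv a b -> 0 < cosang a b.
Proof.
move=> ab0; have /dotv_neq0/andP[a0 b0] := lt0r_neq0 ab0.
by rewrite divr_gt0 // mulr_gt0 // enorm_gt0.
Qed.

Lemma cosang_lt0 a b : dotv a b < 0 -> cosang a b < 0.
Proof.
move=> ab0; have /dotv_neq0/andP[a0 b0] := ltr0_neq0 ab0.
by rewrite pmulr_llt0 // invr_gt0 mulr_gt0 // enorm_gt0.
Qed.

Lemma normr_entry_le p q (A : 'M[R]_(p, q)) i j : `|A i j| <= `|A|.
Proof. by rewrite [leRHS]mx_normrE (le_bigmax _ _ (i, j)). Qed.

Lemma mx_normr_le p q (A : 'M[R]_(p, q)) (e : R) : 0 <= e ->
  (forall i j, `|A i j| <= e) -> `|A| <= e.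
Proof.
by move=> e0 Ae; rewrite [leLHS]/Num.Def.normr/= mx_normrE; apply: bigmax_le => // -[i j] _.
Qed.

Lemma normr_dotv_le a b (A B : R) : `|a| <= A -> `|b| <= B ->
  `|dotv a b| <= n%:R * (A * B).
Proof.
move=> aA bB; have B0 : 0 <= B := le_trans (normr_ge0 b) bB.
have -> : n%:R * (A * B) = \sum_(i < n) (A * B).
  by rewrite sumr_const card_ord mulr_natl.
rewrite (le_trans (ler_norm_sum _ _ _)) //; apply: ler_sum => i _.
by rewrite normrM ler_pM // (le_trans (normr_entry_le _ _ _)).
Qed.

Lemma normr_mulmx_entry_le (A : 'M[R]_n) b i :
  `|(A *m b) i ord0| <= n%:R * (`|A| * `|b|).
Proof.
have -> : n%:R * (`|A| * `|b|) = \sum_(j < n) (`|A| * `|b|).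
  by rewrite sumr_const card_ord mulr_natl.
rewrite mxE (le_trans (ler_norm_sum _ _ _)) //; apply: ler_sum => j _.
by rewrite normrM ler_pM ?normr_entry_le.
Qed.

End InnerProduct.

Section Derivatives.
Variable R : realType.

Lemma continuous_of_is_derive (V : normedModType R) (x dx : R -> V) :
  (forall t : R, is_derive t (1 : R) x (dx t)) -> continuous x.
Proof.
move=> x' t; apply: differentiable_continuous.
by apply/derivable1_diffP; case: (x' t).
Qed.

Lemma is_derive_entry p q (u : R -> 'M[R]_(p, q)) (s : R) (du : 'M[R]_(p, q)) i j :
  is_derive s 1 u du -> is_derive s 1 (fun s => u s i j) (du i j).
Proof.
case=> du_ex <-; split; first exact: (derivable_mxP _ _ _).1 du_ex i j.
by rewrite (derive_mx du_ex) mxE.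
Qed.

Lemma is_derive_dotv n (u v : R -> 'cV[R]_n) (s : R) (du dv : 'cV[R]_n) :
  is_derive s 1 u du -> is_derive s 1 v dv ->
  is_derive s 1 (fun s => dotv (u s) (v s)) (dotv du (v s) + dotv (u s) dv).
Proof.
move=> u' v'.
have := is_derive_sum (fun i => is_deriveM (is_derive_entry i ord0 u')
                                         (is_derive_entry i ord0 v')).
rewrite fct_sumE => /is_derive_eq; apply.
rewrite /dotv -big_split /=; apply: eq_bigr => i _.
by rewrite addrC /GRing.scale /= [v s i ord0 * _]mulrC.
Qed.

Lemma continuous_dotv n (u v : R -> 'cV[R]_n) :
  continuous u -> continuous v -> continuous (fun s => dotv (u s) (v s)).
Proof.
move=> cu cv.
rewrite [X in continuous X](_ : _ = \sum_(i < n) (fun s => u s i ord0 * v s i ord0)).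
  apply: (big_ind (fun h => continuous h)) => [s|F G cF cG s|i _ s].
  - exact: cst_continuous.
  - exact: continuousD (cF s) (cG s).
  - apply: (@continuousM R R^o).
      exact: continuous_comp (cu s) (@coord_continuous R n 1 i ord0 _).
    exact: continuous_comp (cv s) (@coord_continuous R n 1 i ord0 _).
by apply/funext => s; rewrite fct_sumE.
Qed.

Lemma is_derive_translate (V : normedModType R) (u : R -> V) (s c : R) (du : V) :
  is_derive (s + c) 1 u du -> is_derive s 1 (fun s => u (s + c)) du.
Proof.
case=> u_ex u'.
have quotE : (fun h : R => h^-1 *: (((fun s => u (s + c)) \o shift s) (h *: 1) - u (s + c)))
  = (fun h => h^-1 *: ((u \o shift (s + c)) (h *: 1) - u (s + c))).
  by apply/funext => h /=; rewrite addrA.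
by split; rewrite /derivable /derive quotE.
Qed.

End Derivatives.

Section Jacobian.
Variables (R : realType) (n : nat) (f : 'cV[R]_n -> 'cV[R]_n).

Lemma derive_jac x v : differentiable f x -> derive f x v = jac f x *m v.
Proof.
move=> df; rewrite deriveE //; apply/matrixP => i k; rewrite (ord1 k) !mxE.
rewrite {1}(matrix_sum_delta v) linear_sum summxE; apply: eq_bigr => j _.
by rewrite big_ord1 linearZ !mxE deriveE // mulrC.
Qed.

Lemma is_derive_along_line q v (th : R) : differentiable f (q + th *: v) ->
  is_derive th 1 (fun th => f (q + th *: v)) (jac f (q + th *: v) *m v).
Proof.
move=> df.
have quotE : (fun h : R => h^-1 *: (((fun th => f (q + th *: v)) \o shift th) (h *: 1)
           - f (q + th *: v)))
  = (fun h => h^-1 *: ((f \o shift (q + th *: v)) (h *: v) - f (q + th *: v))).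
  apply/funext => h /=; congr (_ *: (f _ - _)).
  by rewrite [h *: 1]mulr1 scalerDl addrCA.
have dv : derivable f (q + th *: v) v by exact: diff_derivable.
by split; rewrite /derivable /derive quotE // -derive_jac.
Qed.

Hypothesis df : forall x, differentiable f x.

Lemma jac_remainder_mvt q v i : exists2 th : R, th \in `]0, 1[ &
  (f (q + v) - f q - jac f q *m v) i ord0 =
  ((jac f (q + th *: v) - jac f q) *m v) i ord0.
Proof.
pose phi th := f (q + th *: v) i ord0.
have phi' (th : R) : is_derive th 1 phi ((jac f (q + th *: v) *m v) i ord0).
  exact/is_derive_entry/is_derive_along_line.
have [th th01 phiE] := MVT ltr01 (fun th _ => phi' th)
  (continuous_subspaceT (continuous_of_is_derive phi')).
exists th => //; move: phiE; rewrite /phi scale1r scale0r addr0 subr0 mulr1.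
by rewrite mulmxBl !mxE => <-.
Qed.

Hypothesis cjac : continuous (jac f).

Lemma jac_linearization (p : 'cV[R]_n) (eta : R) : 0 < eta ->
  exists2 del : R, 0 < del & forall q v : 'cV[R]_n, `|q - p| < del -> `|v| < del ->
    `|f (q + v) - f q - jac f q *m v| <= eta * `|v|.
Proof.
move=> eta0; have m0 : 0 < n%:R * 2 + 1 :> R by rewrite ltr_wpDl ?mulr_ge0.
set c := eta / (n%:R * 2 + 1); have c0 : 0 < c by rewrite divr_gt0.
have nc : n%:R * (c + c) <= eta.
  by rewrite /c -mulrDl mulrA ler_pdivrMr //; lra.
have /nbhs_normP[d /= d0 near_p] : \forall x \near p, `|jac f p - jac f x| < c.
  by move: (@cjac p) => /cvgrPdist_lt; apply.
exists (d / 2) => [|q v qp vd]; first lra.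
apply: mx_normr_le => [|i k]; first by rewrite mulr_ge0 // ltW.
rewrite (ord1 k).
have [th /[!in_itv]/= /andP[th0 th1] ->] := jac_remainder_mvt q v i.
have jac_q : `|jac f p - jac f q| < c by apply: near_p; rewrite /= distrC; lra.
have jac_th : `|jac f p - jac f (q + th *: v)| < c.
  apply: near_p; rewrite /= opprD addrA (le_lt_trans (ler_normB _ _)) //.
  have : th * `|v| <= `|v| by rewrite ler_piMl // ltW.
  by rewrite normrZ gtr0_norm // distrC; lra.
have jac_diff : `|jac f (q + th *: v) - jac f q| <= c + c.
  rewrite distrC in jac_th.
  exact: le_trans (ler_distD (jac f p) _ _) (ltW (ltrD jac_th jac_q)).
apply: le_trans (normr_mulmx_entry_le _ _ _) _.
rewrite mulrA ler_wpM2r //; apply: le_trans nc; exact: ler_wpM2l.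
Qed.

End Jacobian.

Section Compactness.
Variable R : realType.

Lemma near_dist (x del : R) : 0 < del -> \forall y \near x, `|x - y| < del.
Proof. by move=> del0; apply/nbhs_normP; exists del. Qed.

Lemma continuous_near_dist (V : normedModType R) (u : R -> V) s0 (del : R) :
  continuous u -> 0 < del -> \forall s \near s0, `|u s0 - u s| < del.
Proof. by move=> cu del0; move: (@cu s0) => /cvgrPdist_lt; apply. Qed.

Lemma compact_uniform_radius (K : set R) (P : R -> R -> Prop) : compact K ->
  (forall s0, K s0 -> exists2 del, 0 < del &
     \forall s \near s0, forall d, 0 < d < del -> P d s) ->
  exists2 d, 0 < d & forall s, K s -> P d s.
Proof.
move=> /compact_near_coveringP cK loc.
have : \forall d \near 0^'+, K `<=` P d.
  apply: cK => s0 /loc[del del0 near_s0].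
  exists ([set s | forall d, 0 < d < del -> P d s], [set d | 0 < d < del]).
    split=> //=; near=> d; apply/andP; split.
      by near: d; exact: nbhs_right_gt.
    by near: d; exact: nbhs_right_lt.
  by move=> [s d] [/= Ps Pd]; exact: Ps.
move=> KP; have : \forall d \near 0^'+, 0 < d /\ K `<=` P d.
  near=> d; split; first by near: d; exact: nbhs_right_gt.
  by near: d; exact: KP.
by move=> /filter_ex[d [d0 Pd]]; exists d.
Unshelve. all: by end_near. Qed.

Lemma continuous_compact_norm_bounded (V : normedModType R) (u : R -> V) (K : set R) :
  continuous u -> compact K -> exists2 Z, 0 < Z & forall s, K s -> `|u s| <= Z.
Proof.
move=> cu cK.
have [Z [_ uZ]] := compact_bounded (continuous_compact (continuous_subspaceT cu) cK).
exists (`|Z| + 1) => [|s Ks]; first by rewrite ltr_wpDl.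
by apply: (uZ (`|Z| + 1)); [rewrite (le_lt_trans (ler_norm Z)) ?ltrDl | exists s].
Qed.

End Compactness.

Section UniformEstimates.
Variables (R : realType) (n : nat) (x0 : R -> 'cV[R]_n) (K : set R).
Hypotheses (cx0 : continuous x0) (cK : compact K).

Lemma uniform_linearization (f : 'cV[R]_n -> 'cV[R]_n) (eta : R) : C1 f -> 0 < eta ->
  exists2 d, 0 < d & forall s, K s -> forall v, `|v| < d ->
    `|f (x0 s + v) - f (x0 s) - jac f (x0 s) *m v| <= eta * `|v|.
Proof.
move=> [df cjac] eta0; apply: compact_uniform_radius => // s0 _.
have [del del0 lin] := jac_linearization df cjac (x0 s0) eta0.
exists del => //; apply: filterS (continuous_near_dist s0 cx0 del0).
move=> s x0s d /andP[_ d_del] v vd.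
by apply: lin; rewrite 1?distrC // (lt_trans vd).
Qed.

Variable g : R -> 'cV[R]_n -> R -> 'cV[R]_n.
Hypothesis cg : {within [set p : R * 'cV[R]_n * R | 0 <= p.2 <= 1],
  continuous (fun p : R * 'cV[R]_n * R => g p.1.1 p.1.2 p.2)}.

Lemma g_near_eps0 s0 x (eta : R) : 0 < eta -> exists2 del, 0 < del &
  forall s v e, `|s - s0| < del -> `|v - x| < del -> 0 <= e < del ->
    `|g s v e - g s0 x 0| < eta.
Proof.
move=> eta0; have in_dom : [set p : R * 'cV[R]_n * R | 0 <= p.2 <= 1] (s0, x, 0).
  by rewrite /= lexx ler01.
have := (subspace_continuousP _ _).1 cg _ in_dom.
move=> /cvgrPdist_lt /(_ eta eta0); rewrite /within /= => /nbhs_ballP[d d0 near_g].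
exists (Num.min d 1) => [|s v e]; first by rewrite lt_min d0 ltr01.
rewrite !lt_min => /andP[sd _] /andP[vd _] /andP[e0 /andP[ed e1]].
have sve_near : ball (s0, x, 0) d (s, v, e).
  split; first split; rewrite /= -ball_normE /ball_ /=.
  - by rewrite distrC.
  - by rewrite distrC.
  - by rewrite sub0r normrN ger0_norm.
by have := near_g _ sve_near; rewrite /= e0 (ltW e1) distrC; apply.
Qed.

Lemma continuous_g_eps0 : continuous (fun s => g s (x0 s) 0).
Proof.
move=> s0; apply/cvgrPdist_lt => eta eta0.
have [del del0 g_del] := g_near_eps0 s0 (x0 s0) eta0.
near=> s; rewrite distrC; apply: g_del; last by rewrite lexx.
- by rewrite distrC; near: s; exact: near_dist.
- by rewrite distrC; near: s; exact: continuous_near_dist.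
Unshelve. all: by end_near. Qed.

Lemma g_uniform_near_eps0 (eta : R) : 0 < eta ->
  exists2 d, 0 < d & forall s, K s -> forall al v e, `|al| < d -> `|v| < d ->
    0 < e < d -> `|g (s + al) (x0 s + v) e - g s (x0 s) 0| <= eta.
Proof.
move=> eta0; apply: compact_uniform_radius => // s0 _.
have [del del0 g_del] := g_near_eps0 s0 (x0 s0) (divr_gt0 eta0 (ltr0n _ 2)).
exists (del / 2); first by rewrite divr_gt0.
near=> s => d /andP[d0 dl] al v e al_d v_d /andP[e0 ed].
have s_s0 : `|s - s0| < del / 2.
  by rewrite distrC; near: s; apply: near_dist; lra.
have x0s : `|x0 s - x0 s0| < del / 2.
  by rewrite distrC; near: s; apply: continuous_near_dist => //; lra.
have g_shift : `|g (s + al) (x0 s + v) e - g s0 (x0 s0) 0| < eta / 2.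
  apply: g_del; last by rewrite ltW //=; lra.
  - by rewrite addrAC (le_lt_trans (ler_normD _ _)) //; lra.
  - by rewrite addrAC (le_lt_trans (ler_normD _ _)) //; lra.
have g_s : `|g s (x0 s) 0 - g s0 (x0 s0) 0| < eta / 2.
  by apply: g_del; rewrite ?lexx //=; lra.
rewrite (le_trans (ler_distD (g s0 (x0 s0) 0) _ _)) // (distrC _ (g s _ _)).
by apply/ltW; rewrite [eta]splitr ltrD.
Unshelve. all: by end_near. Qed.

End UniformEstimates.

Lemma is_derive_adjoint_pairing (R : realType) n (f : 'cV[R]_n -> 'cV[R]_n)
    (x0 y z : R -> 'cV[R]_n) (G : 'cV[R]_n) (s : R) :
  is_derive s 1 x0 (f (x0 s)) -> is_derive s 1 y (f (y s) + G) ->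
  is_derive s 1 z (- ((jac f (x0 s))^T *m z s)) ->
  is_derive s 1 (fun s => dotv (z s) (y s - x0 s))
    (dotv (z s) (f (y s) - f (x0 s) - jac f (x0 s) *m (y s - x0 s)) + dotv (z s) G).
Proof.
move=> x0' y' z'; apply: is_derive_eq (is_derive_dotv z' (is_deriveB y' x0')) _.
by rewrite dotvNl dotv_trmx !dotvBr !dotvDr; ring.
Qed.

Lemma MVT_Rintegral (R : realType) (w w' h : R -> R) (k a b : R) : a < b ->
  (forall s : R, is_derive s 1 w (w' s)) -> continuous h ->
  exists2 c, c \in `]a, b[ &
    w b - w a - k * \int[lebesgue_measure]_(u in `[a, b]) h u
    = (w' c - k * h c) * (b - a).
Proof.
move=> ab w'_ ch.
have hint : lebesgue_measure.-integrable `[a, b] (EFin \o h).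
  apply: continuous_compact_integrable; first exact: segment_compact.
  exact: continuous_subspaceT.
pose H x := \int[lebesgue_measure]_(u in `[a, x]) h u.
have H' (s : R) : s \in `]a, b[ -> is_derive s 1 H (h s).
  rewrite in_itv /= => /andP[a_s s_b].
  have [? H'E] := continuous_FTC1_closed s_b hint a_s (ch s).
  by split; rewrite // -derive1E.
have ckH : {within `[a, b], continuous (fun s => k * H s)}.
  move=> x; apply: continuousM; first exact: cst_continuous.
  exact: parameterized_integral_continuous (ltW ab) hint x.
have [c cab E] := MVT ab (fun s sab => is_deriveB (w'_ s) (is_deriveZ k (H' s sab)))
  (within_continuousB (continuous_subspaceT (continuous_of_is_derive w'_)) ckH).
have Ha : H a = 0 by rewrite /H set_itv1 Rintegral_set1.
have WE x : (w - k \*: H) x = w x - k * H x by [].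
by exists c => //; rewrite -E !WE Ha mulr0 subr0 addrAC.
Qed.

Lemma sgr_perturbation (R : realFieldType) (I X eps : R) : 0 < eps -> I != 0 ->
  `|X - eps * I| <= eps * (`|I| / 2) -> Num.sg X = Num.sg I.
Proof.
move=> eps0; case: (ltrgt0P I) => // I0 _.
- have epsI : 0 < eps * I by rewrite mulr_gt0.
  rewrite ler_norml => /andP[lo _].
  by rewrite !gtr0_sg //; lra.
- have epsI : eps * I < 0 by rewrite pmulr_rlt0.
  rewrite ler_norml => /andP[_ hi].
  by rewrite !ltr0_sg //; lra.
Qed.

Section Displacement.
Variables (R : realType) (n : nat) (f : 'cV[R]_n -> 'cV[R]_n)
  (g : R -> 'cV[R]_n -> R -> 'cV[R]_n) (T : R) (x0 : R -> 'cV[R]_n)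
  (xe : R -> R -> 'cV[R]_n) (Delta : R -> R) (M eps0 : R)
  (z : R -> 'cV[R]_n) (rho t : R).
Hypotheses (f_C1 : C1 f)
  (g_cont : {within [set p : R * 'cV[R]_n * R | 0 <= p.2 <= 1],
     continuous (fun p : R * 'cV[R]_n * R => g p.1.1 p.1.2 p.2)})
  (T_gt0 : 0 < T) (M_gt0 : 0 < M) (eps0_gt0 : 0 < eps0)
  (x0_sol : solves (fun _ x => f x) x0) (x0_per : Tperiodic T x0)
  (xe_sol : forall eps, 0 < eps <= eps0 ->
     solves (fun t x => f x + eps *: g t x eps) (xe eps) /\ Tperiodic T (xe eps))
  (xe_near : forall eps s, 0 < eps <= eps0 -> 0 <= s <= T ->
     `| xe eps (s + Delta eps) - x0 s | <= M * eps)
  (Delta_cvg : Delta x @[x --> 0^'+] --> 0)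
  (z_sol : solves (fun t y => - ((jac f (x0 t))^T *m y)) z)
  (z_mult : forall s, z (s + T) = rho *: z s)
  (t_in : 0 <= t <= T).

Let displacement eps s := xe eps (s + Delta eps) - x0 s.
Let pairing eps s := dotv (z s) (displacement eps s).
Let pairing_rate eps s :=
  dotv (z s) (f (xe eps (s + Delta eps)) - f (x0 s) - jac f (x0 s) *m displacement eps s)
  + eps * dotv (z s) (g (s + Delta eps) (xe eps (s + Delta eps)) eps).
Let forcing s := dotv (z s) (g s (x0 s) 0).

Lemma displacement_periodic eps s : 0 < eps <= eps0 ->
  displacement eps (s + T) = displacement eps s.
Proof.
by case/xe_sol=> _ xe_per; rewrite /displacement addrAC xe_per x0_per.
Qed.

Lemma displacement_small eps s : 0 < eps <= eps0 -> t - T <= s <= t ->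
  `|displacement eps s| <= M * eps.
Proof.
move=> eps_in /andP[Ts st]; case: (lerP 0 s) => s0.
  by apply: xe_near; rewrite // s0 (le_trans st) //; case/andP: t_in.
rewrite -displacement_periodic //; apply: xe_near => //.
by case/andP: t_in => t0 _; apply/andP; split; lra.
Qed.

Lemma pairing_multiplier eps : 0 < eps <= eps0 ->
  pairing eps t = rho * pairing eps (t - T).
Proof.
move=> eps_in.
by rewrite /pairing -[in LHS](subrK T t) z_mult displacement_periodic // dotvZl.
Qed.

Lemma is_derive_pairing eps (s : R) : 0 < eps <= eps0 ->
  is_derive s 1 (pairing eps) (pairing_rate eps s).
Proof.
case/xe_sol=> xe_sol' _; rewrite /pairing_rate -dotvZr.
apply: is_derive_adjoint_pairing (x0_sol s) _ (z_sol s).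
exact: is_derive_translate (xe_sol' (s + Delta eps)).
Qed.

Lemma pairing_rate_deviation eps s (Z eta : R) : 0 < eps <= eps0 -> t - T <= s <= t ->
  0 <= eta -> `|z s| <= Z ->
  `|f (xe eps (s + Delta eps)) - f (x0 s) - jac f (x0 s) *m displacement eps s|
    <= eta * `|displacement eps s| ->
  `|g (s + Delta eps) (xe eps (s + Delta eps)) eps - g s (x0 s) 0| <= eta ->
  `|pairing_rate eps s - eps * forcing s| <= eps * (eta * (n%:R * Z * (M + 1))).
Proof.
move=> eps_in s_in eta0 zZ R_small g_small; have /andP[eps_gt0 _] := eps_in.
rewrite /pairing_rate /forcing -addrA -mulrBr -dotvBr.
have := normr_dotv_le zZ (le_trans R_small (ler_wpM2l eta0 (displacement_small eps_in s_in))).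
have := ler_wpM2l (ltW eps_gt0) (normr_dotv_le zZ g_small).
set A := dotv _ (_ - _ - _); set B := dotv _ (_ - _) => epsB nA.
rewrite (le_trans (ler_normD _ _)) // normrM gtr0_norm //; lra.
Qed.

Lemma pairing_rate_estimate eta : 0 < eta -> \forall eps \near 0^'+,
  forall s, t - T <= s <= t -> `|pairing_rate eps s - eps * forcing s| <= eps * eta.
Proof.
move=> eta0; have cx0 := continuous_of_is_derive x0_sol.
have cK : compact `[t - T, t] by exact: segment_compact.
have [Z Z0 zZ] := continuous_compact_norm_bounded (continuous_of_is_derive z_sol) cK.
have C0 : 0 <= n%:R * Z * (M + 1).
  by rewrite !mulr_ge0 ?(ltW Z0) ?addr_ge0 ?(ltW M_gt0).
pose eta1 := eta / (n%:R * Z * (M + 1) + 1).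
have eta1_gt0 : 0 < eta1 by rewrite divr_gt0 ?ltr_wpDl.
have eta1C : eta1 * (n%:R * Z * (M + 1)) <= eta.
  by rewrite mulrAC ler_pdivrMr ?ltr_wpDl //; lra.
have [d1 d1_gt0 lin] := uniform_linearization cx0 cK f_C1 eta1_gt0.
have [d2 d2_gt0 g_unif] := g_uniform_near_eps0 cx0 cK g_cont eta1_gt0.
near=> eps => s s_in.
have eps_gt0 : 0 < eps by near: eps; exact: nbhs_right_gt.
have eps_in : 0 < eps <= eps0 by rewrite eps_gt0; near: eps; exact: nbhs_right_le.
have Md1 : M * eps < d1.
  by rewrite mulrC -ltr_pdivlMr //; near: eps; apply: nbhs_right_lt; rewrite divr_gt0.
have Md2 : M * eps < d2.
  by rewrite mulrC -ltr_pdivlMr //; near: eps; apply: nbhs_right_lt; rewrite divr_gt0.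
have eps_d2 : 0 < eps < d2 by rewrite eps_gt0; near: eps; exact: nbhs_right_lt.
have Delta_d2 : `|Delta eps| < d2.
  by rewrite -normrN -sub0r; near: eps; move: Delta_cvg => /cvgrPdist_lt; apply.
have Ks : `[t - T, t]%classic s by rewrite /= in_itv.
have dM := displacement_small eps_in s_in.
have yE : x0 s + displacement eps s = xe eps (s + Delta eps) by rewrite addrC subrK.
apply: le_trans (ler_wpM2l (ltW eps_gt0) eta1C).
apply: pairing_rate_deviation; rewrite ?(ltW eta1_gt0) ?zZ // -yE.
  exact: lin s Ks _ (le_lt_trans dM Md1).
exact: g_unif s Ks _ _ _ Delta_d2 (le_lt_trans dM Md2) eps_d2.
Unshelve. all: by end_near. Qed.

Lemma pairing_defect eta : 0 < eta -> \forall eps \near 0^'+,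
  `|(rho - 1) * pairing eps (t - T)
     - eps * \int[lebesgue_measure]_(s in `[t - T, t]) forcing s| <= eps * eta.
Proof.
move=> eta0; have cforcing : continuous forcing.
  exact: continuous_dotv (continuous_of_is_derive z_sol)
    (continuous_g_eps0 (continuous_of_is_derive x0_sol) g_cont).
have := pairing_rate_estimate (divr_gt0 eta0 T_gt0).
apply: filter_app; near=> eps => rate_small.
have eps_in : 0 < eps <= eps0.
  by apply/andP; split; near: eps; [exact: nbhs_right_gt | exact: nbhs_right_le].
have tT : t - T < t by rewrite gtrBl.
have [c /[!in_itv]/= /andP[c1 c2] mvt] := MVT_Rintegral eps tT
  (fun s => @is_derive_pairing eps s eps_in) cforcing.
have -> : (rho - 1) * pairing eps (t - T) = pairing eps t - pairing eps (t - T).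
  by rewrite pairing_multiplier // mulrBl mul1r.
rewrite mvt (_ : t - (t - T) = T); last by ring.
rewrite normrM (gtr0_norm T_gt0) -ler_pdivlMr // -mulrA.
by apply: rate_small; rewrite (ltW c1) (ltW c2).
Unshelve. all: by end_near. Qed.

Lemma sgr_pairing : Mperp g T x0 z rho t != 0 -> \forall eps \near 0^'+,
  Num.sg (dotv (z t) (xe eps (t + Delta eps) - x0 t)) = Num.sg (Mperp g T x0 z rho t).
Proof.
rewrite /Mperp; set I := Rintegral _ _ _.
rewrite mulf_eq0 negb_or mulf_eq0 negb_or invr_eq0 subr_eq0 => /andP[/andP[_ rho1] I0].
have I2 : 0 < `|I| / 2 by rewrite divr_gt0 ?normr_gt0.
have := pairing_defect I2.
apply: filter_app; near=> eps => defect_small.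
have eps_in : 0 < eps <= eps0.
  by apply/andP; split; near: eps; [exact: nbhs_right_gt | exact: nbhs_right_le].
have eps_gt0 : 0 < eps by case/andP: eps_in.
have -> : dotv (z t) (xe eps (t + Delta eps) - x0 t)
    = rho / (rho - 1) * ((rho - 1) * pairing eps (t - T)).
  by rewrite mulrA divfK ?subr_eq0 // -pairing_multiplier.
by rewrite [LHS]sgrM [RHS]sgrM (sgr_perturbation eps_gt0 I0 defect_small).
Unshelve. all: by end_near. Qed.

End Displacement.

Unset Implicit Arguments. Set Strict Implicit.

Theorem corollary2 (R : realType) (n : nat)
  (f : 'cV[R]_n -> 'cV[R]_n) (g : R -> 'cV[R]_n -> R -> 'cV[R]_n)
  (T : R) (x0 : R -> 'cV[R]_n)
  (xe : R -> R -> 'cV[R]_n) (Delta : R -> R) (M eps0 : R)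
  (z : R -> 'cV[R]_n) (rho : R) :
  C1 f ->
  {within [set p : R * 'cV[R]_n * R | 0 <= p.2 <= 1],
     continuous (fun p : R * 'cV[R]_n * R => g p.1.1 p.1.2 p.2)} ->
  0 < T ->
  nondegenerate_cycle f T x0 ->
  0 < M -> 0 < eps0 ->
  (forall eps, 0 < eps <= eps0 ->
     solves (fun t x => f x + eps *: g t x eps) (xe eps) /\ Tperiodic T (xe eps)) ->
  (forall eps t, 0 < eps <= eps0 -> 0 <= t <= T ->
     `| xe eps (t + Delta eps) - x0 t | <= M * eps) ->
  Delta x @[x --> 0^'+] --> 0 ->
  adjoint_eigenfunction f T x0 z rho ->
  ~ Tperiodic T z ->
  forall t, 0 <= t <= T ->
    (0 < Mperp g T x0 z rho t ->
       \forall eps \near 0^'+, 0 < cosang (z t) (xe eps (t + Delta eps) - x0 t)) /\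
    (Mperp g T x0 z rho t < 0 ->
       \forall eps \near 0^'+, cosang (z t) (xe eps (t + Delta eps) - x0 t) < 0).
Proof.
(* rho <> 1 is not assumed separately: rho / (rho - 1) = 0 when rho = 1. *)
move=> f_C1 g_cont T_gt0 [x0_sol [x0_per _]] M_gt0 eps0_gt0 xe_sol xe_near Delta_cvg
  [z_sol [_ z_mult]] _ t t_in.
have sgr_near := sgr_pairing f_C1 g_cont T_gt0 M_gt0 eps0_gt0 x0_sol x0_per
  xe_sol xe_near Delta_cvg z_sol z_mult t_in.
split=> [Mp_gt0 | Mp_lt0].
- apply: filterS (sgr_near (lt0r_neq0 Mp_gt0)) => eps sgrE.
  by apply: cosang_gt0; rewrite -sgr_gt0 sgrE sgr_gt0.
- apply: filterS (sgr_near (ltr0_neq0 Mp_lt0)) => eps sgrE.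
  by apply: cosang_lt0; rewrite -sgr_lt0 sgrE sgr_lt0.
Qed.
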